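(* Let $T\in\mathcal L(\mathcal P_n)$, $T\ne0$, and suppose there is a constant $C>0$ such that for each nonconstant $f\in\mathcal P_n$ there exist $u\in Z(f)$ and $v\in Z(Tf)$ with $|u-v|\le C$. Then $$T=a_0I+a_1D+\cdots+a_nD^n,\qquad\text{where } a_k=(T\phi_k)(0)\ (k=0,\dots,n)\ \text{and}\ a_0\neq0.$$
   Context: Let $n\ge 1$ be an integer and $\mathcal P_n$ the complex vector space of polynomials in one complex variable of degree at most $n$; $\mathcal L(\mathcal P_n)$ is the set of linear operators $\mathcal P_n\to\mathcal P_n$; $\phi_k(z)=z^k/k!$; $D$ is differentiation on $\mathcal P_n$ and $I$ the identity. For a nonzero $f$, $Z(f)$ is the multiset of roots of $f$ (with multiplicity; empty for nonzero constants); $Z(0)=\mathbb C$. *)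

(* complex numbers as R[i] over an arbitrary realType R
   (every realType is a model of the real numbers). *)
From HB Require Import structures.
From mathcomp Require Import all_boot all_order all_algebra.
From mathcomp Require Import reals complex.
Set Implicit Arguments. Unset Strict Implicit. Unset Printing Implicit Defensive.
Import Order.TTheory GRing.Theory Num.Theory.
Local Open Scope ring_scope.

Definition inPn {K : nzRingType} (n : nat) (p : {poly K}) : bool :=
  (size p <= n.+1)%N.

Definition phi {K : fieldType} (k : nat) : {poly K} := (k`!%:R)^-1 *: 'X^k.

(* T is a linear operator P_n -> P_n (represented by a function on {poly K};
   its values outside P_n are irrelevant). *)
Definition is_op_Pn {K : fieldType} (n : nat) (T : {poly K} -> {poly K}) : Prop :=
  (forall f, inPn n f -> inPn n (T f)) /\
  (forall (a : K) f g, inPn n f -> inPn n g -> T (a *: f + g) = a *: T f + T g).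

From HB Require Import structures.
From mathcomp Require Import all_boot all_order all_algebra.
From mathcomp Require Import reals complex.
From mathcomp Require Import ring zify.
Import Order.TTheory GRing.Theory Num.Theory.
Local Open Scope ring_scope.
Set Implicit Arguments. Unset Strict Implicit. Unset Printing Implicit Defensive.

(* Conjugating [T] by the translation by [w] gives an operator that is polynomial
   in [w], with coefficients [shift_coef d] satisfying [shift_coef 0 = T] and
   [D (shift_coef d) - (shift_coef d) D = d.+1 * shift_coef d.+1].  Applied to
   [('X - w) ^+ m], the hypothesis provides, for every [w], a root of modulus at
   most [C] of the conjugated image of ['X^m].  If [shift_coef N], [N > 0], were the
   last coefficient not vanishing on monomials, it would commute with [D]; a trace
   argument shows that the first monomial ['X^k] it does not kill has [k > 0], and
   its image is a nonzero constant [c].  For large [w] the term [w ^+ N * c] then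
   dominates and leaves no root in the disk.  So [T] commutes with [D], which
   forces [T = \sum_k a_k D^k]; if [a_0 = 0], the first monomial not killed by [T]
   is nonconstant but is sent to a nonzero constant, which has no root. *)

Lemma sum_triangle (V : nmodType) (F : nat -> nat -> V) M :
  \sum_(d < M) \sum_(i < d.+1) F i (d - i)%N
    = \sum_(i < M) \sum_(j < (M - i)%N) F i j.
Proof.
elim: M => [|M IH]; first by rewrite !big_ord0.
rewrite big_ord_recr /= IH [RHS]big_ord_recr /= subSnn big_ord1.
rewrite big_ord_recr /= subnn addrA; congr (_ + _).
rewrite -big_split; apply: eq_bigr => i _.
by rewrite subSn 1?ltnW // big_ord_recr.
Qed.

Lemma sum_square_antidiagonal (V : nmodType) (F : nat -> nat -> V) n :
  (forall i j, (n < i)%N -> F i j = 0) -> (forall i j, (n < j)%N -> F i j = 0) ->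
  \sum_(i < n.+1) \sum_(j < n.+1) F i j
    = \sum_(d < (n + n).+1) \sum_(i < d.+1) F i (d - i)%N.
Proof.
move=> F_i F_j; rewrite sum_triangle.
rewrite (big_ord_widen (n + n).+1 (fun i => \sum_(j < n.+1) F i j)); last by lia.
rewrite big_mkcond; apply: eq_bigr => i _; case: ltnP => [i_n|n_i]; last first.
  by rewrite big1 // => j _; apply: F_i.
rewrite (big_ord_widen ((n + n).+1 - i) (F i)); last by lia.
by rewrite big_mkcond; apply: eq_bigr => j _; case: ltnP => // /F_j ->.
Qed.

(* The weights [i] and [j] of a term [G i j] with [i + j = d.+1] add up to [d.+1]. *)
Lemma sum_antidiagonal_weight (V : nmodType) (G : nat -> nat -> V) d :
  \sum_(i < d.+1) G i.+1 (d - i)%N *+ i.+1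
    + \sum_(i < d.+1) G i (d.+1 - i)%N *+ (d.+1 - i)
  = (\sum_(i < d.+2) G i (d.+1 - i)%N) *+ d.+1.
Proof.
rewrite -sumrMnl.
have split_weight (i : 'I_d.+2) :
    G i (d.+1 - i)%N *+ d.+1 = G i (d.+1 - i)%N *+ i + G i (d.+1 - i)%N *+ (d.+1 - i).
  by rewrite -mulrnDr subnKC // -ltnS.
rewrite (eq_bigr _ (fun i _ => split_weight i)) big_split /=.
rewrite [X in _ = X + _]big_ord_recl [X in _ = _ + X]big_ord_recr /= subnn.
rewrite !mulr0n add0r addr0.
by congr (_ + _); apply: eq_bigr => i _; rewrite /bump /= add1n subSS.
Qed.

Section DividedDerivatives.
Variable K : comNzRingType.
Implicit Types p : {poly K}.

Lemma deriv_nderivn p i : (p^`N(i))^`() = p^`N(i.+1) *+ i.+1.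
Proof.
apply/polyP=> k; rewrite coef_deriv coefMn !coef_nderivn -!mulrnA addSnnS.
congr (_ *+ _); rewrite mulnC [RHS]mulnC.
have := mul_bin_left (i.+1 + k) i.
by rewrite addSn subSn ?leq_addr // addKn addnS => ->.
Qed.

Lemma nderivn_deriv p j : (p^`())^`N(j) = p^`N(j.+1) *+ j.+1.
Proof.
apply/polyP=> k; rewrite coef_nderivn coefMn coef_deriv coef_nderivn -!mulrnA.
rewrite addSn; congr (_ *+ _).
by have := mul_bin_diag (j + k).+1 j => /= ->; rewrite mulnC.
Qed.

Lemma exprXsubC_nderivn (w : K) m n : (m <= n)%N ->
  ('X - w%:P) ^+ m = \sum_(j < n.+1) (-w) ^+ j *: ('X^m)^`N(j).
Proof.
move=> le_mn; rewrite -polyCN exprDn.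
rewrite (big_ord_widen n.+1 (fun j => ('X ^+ (m - j) * (-w)%:P ^+ j) *+ 'C(m, j))) ?ltnS //.
rewrite big_mkcond; apply: eq_bigr => j _; rewrite nderivnXn; case: ltnP => le_jm.
  by rewrite -rmorphXn mulrC mul_polyC scalerMnr.
by rewrite bin_small // mulr0n scaler0.
Qed.

End DividedDerivatives.

Section DegreeBounded.
Variables (K : nzRingType) (n : nat).
Implicit Types p q : {poly K}.
Local Notation Pn := (@inPn K n).

Lemma inPn0 : Pn 0.
Proof. by rewrite /inPn size_poly0. Qed.

Lemma inPnD p q : Pn p -> Pn q -> Pn (p + q).
Proof. by rewrite /inPn => Pp Pq; rewrite (leq_trans (size_polyD _ _)) // geq_max Pp. Qed.

Lemma inPnZ a p : Pn p -> Pn (a *: p).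
Proof. exact/leq_trans/size_scale_leq. Qed.

Lemma inPn_sum (I : Type) (r : seq I) (P : pred I) (F : I -> {poly K}) :
  (forall i, P i -> Pn (F i)) -> Pn (\sum_(i <- r | P i) F i).
Proof. by move=> PF; elim/big_ind: _ => //; [apply: inPn0 | apply: inPnD]. Qed.

Lemma inPn_nderivn p j : Pn p -> Pn p^`N(j).
Proof. by move=> Pp; rewrite /inPn (leq_trans (size_poly _ _)) // (leq_trans (leq_subr _ _)). Qed.

Lemma inPnXn m : (m <= n)%N -> Pn 'X^m.
Proof. by rewrite /inPn size_polyXn. Qed.

Lemma inPn_expand p : Pn p -> p = \sum_(m < n.+1) p`_m *: 'X^m.
Proof.
move=> Pp; rewrite -poly_def; apply/polyP => i; rewrite coef_poly.
by case: ltnP => // le_ni; rewrite nth_default // (leq_trans Pp le_ni).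
Qed.

End DegreeBounded.

Lemma deriv_eq0_const (K : numDomainType) (p : {poly K}) : p^`() = 0 -> p = (p`_0)%:P.
Proof.
move=> p'0; apply/polyP => -[|i]; rewrite coefC //=.
have /eqP := congr1 (fun q : {poly K} => q`_i) p'0.
by rewrite coef_deriv coef0 mulrn_eq0 => /eqP.
Qed.

Lemma lowest_nonzero_const (K : numDomainType) n (B : nat -> {poly K}) :
  (forall k, (k <= n)%N -> (B k)^`() = B k.-1 *+ k) ->
  (exists2 m, (m <= n)%N & B m != 0) ->
  exists k, [/\ (k <= n)%N, (B k)`_0 != 0 & B k = ((B k)`_0)%:P].
Proof.
move=> DB [m le_mn Bm]; have ex_k : exists k, (k <= n)%N && (B k != 0).
  by exists m; rewrite le_mn.
case: (ex_minnP ex_k) => k /andP[le_kn Bk] min_k.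
have Bk_const : B k = ((B k)`_0)%:P.
  apply/deriv_eq0_const; rewrite DB //; case: k le_kn Bk min_k => [|k] // le_kn _ min_k.
  have [-> | Bk] := eqVneq (B k) 0; first by rewrite mul0rn.
  by have := min_k k; rewrite Bk (ltnW le_kn) ltnn => /(_ isT).
by exists k; split=> //; apply: contra Bk => /eqP c0; rewrite Bk_const c0.
Qed.

Lemma norm_horner_le (K : numDomainType) (p : {poly K}) r z : `|z| <= r ->
  `|p.[z]| <= \sum_(i < size p) `|p`_i| * r ^+ i.
Proof.
move=> le_zr; rewrite horner_coef; apply: le_trans (ler_norm_sum _ _ _) _.
apply: ler_sum => i _; rewrite normrM normrX ler_wpM2l //.
by rewrite lerXn2r // ?nnegrE // (le_trans _ le_zr).
Qed.

(* On the disk [|z| <= r] the top term [w ^+ N * c] dominates the lower ones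
   once [w] is large, so it cannot be cancelled. *)
Lemma no_bounded_roots_top_const (K : numFieldType) (q : nat -> {poly K}) M N c r :
  (0 < N)%N -> (N < M)%N -> c != 0 -> q N = c%:P -> (forall d, (N < d)%N -> q d = 0) ->
  ~ (forall w : K, exists2 z, `|z| <= r & \sum_(d < M) w ^+ d * (q d).[z] = 0).
Proof.
move=> N_gt0 lt_NM c_neq0 qN q_gt roots.
have r_ge0 : 0 <= r by case: (roots 0) => z /(le_trans (normr_ge0 z)).
pose bound d := \sum_(i < size (q d)) `|(q d)`_i| * r ^+ i.
have bound_ge0 d : 0 <= bound d by apply: sumr_ge0 => i _; rewrite mulr_ge0 ?exprn_ge0.
pose S := \sum_(d < N) bound d.
have S_ge0 : 0 <= S by apply: sumr_ge0.
have c_gt0 : 0 < `|c| by rewrite normr_gt0.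
pose w := 1 + S / `|c|.
have w_ge1 : 1 <= w by rewrite lerDl divr_ge0 // ltW.
have w_gt0 : 0 < w := lt_le_trans ltr01 w_ge1.
have [z le_zr] := roots w.
have -> : \sum_(d < M) w ^+ d * (q d).[z] = \sum_(d < N) w ^+ d * (q d).[z] + w ^+ N * c.
  rewrite -(subnKC lt_NM) big_split_ord /= big_ord_recr /= qN hornerC.
  by rewrite [X in _ + X]big1 ?addr0 // => i _; rewrite q_gt ?horner0 ?mulr0 // ltnS leq_addr.
move/eqP; rewrite addrC addr_eq0 => /eqP top.
have : `|w ^+ N * c| <= w ^+ N.-1 * S.
  rewrite top normrN; apply: le_trans (ler_norm_sum _ _ _) _.
  rewrite /S mulr_sumr; apply: ler_sum => d _.
  rewrite normrM normrX (ger0_norm (ltW w_gt0)).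
  apply: le_trans (ler_wpM2l (exprn_ge0 _ (ltW w_gt0)) (norm_horner_le (q d) le_zr)) _.
  by rewrite ler_wpM2r ?bound_ge0 // ler_weXn2l // -ltnS prednK.
have -> : `|w ^+ N * c| = w ^+ N.-1 * (`|c| + S).
  rewrite normrM normrX (ger0_norm (ltW w_gt0)) -(prednK N_gt0) exprS /=.
  by rewrite -mulrA mulrC -mulrA; congr (_ * _); rewrite /w mulrDr mulr1 mulrC divfK ?normr_eq0.
by rewrite ler_pM2l ?exprn_gt0 // gerDr => /(lt_le_trans c_gt0); rewrite ltxx.
Qed.

Section LinearOperator.
Variables (K : numFieldType) (n : nat) (T : {poly K} -> {poly K}).
Hypothesis T_op : is_op_Pn n T.
Implicit Types p q : {poly K}.
Local Notation Pn := (@inPn K n).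

Lemma T_Pn p : Pn p -> Pn (T p). Proof. exact: T_op.1. Qed.

Lemma T0 : T 0 = 0.
Proof.
have := T_op.2 1 0 0 (inPn0 _ _) (inPn0 _ _); rewrite !scale1r addr0.
by move=> T00; apply: (addrI (T 0)); rewrite addr0 -T00.
Qed.

Lemma TZ a p : Pn p -> T (a *: p) = a *: T p.
Proof. by move=> Pp; have := T_op.2 a p 0 Pp (inPn0 _ _); rewrite !addr0 T0 addr0. Qed.

Lemma TD p q : Pn p -> Pn q -> T (p + q) = T p + T q.
Proof. by move=> Pp Pq; have := T_op.2 1 p q Pp Pq; rewrite !scale1r. Qed.

Lemma TMn p k : Pn p -> T (p *+ k) = T p *+ k.
Proof. by move=> Pp; rewrite -[p *+ k]scaler_nat TZ // scaler_nat. Qed.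

Lemma T_sum (I : Type) (r : seq I) (P : pred I) (F : I -> {poly K}) :
  (forall i, P i -> Pn (F i)) -> T (\sum_(i <- r | P i) F i) = \sum_(i <- r | P i) T (F i).
Proof.
move=> PF; elim: r => [|x r IH]; first by rewrite !big_nil T0.
by rewrite !big_cons; case: ifP => // Px; rewrite TD ?IH ?PF // inPn_sum.
Qed.

Lemma T_expand p : Pn p -> T p = \sum_(m < n.+1) p`_m *: T 'X^m.
Proof.
move=> Pp; rewrite {1}(inPn_expand Pp) T_sum; last by move=> m _; apply/inPnZ/inPnXn; rewrite -ltnS.
by apply: eq_bigr => m _; rewrite TZ // inPnXn // -ltnS.
Qed.

(* The coefficient of [w ^+ d] in the conjugate of [T] by the translation by [w]
   (see [horner_T_shift]); [shift_coef 1] is the commutator [D T - T D]. *)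
Definition shift_coef d p :=
  \sum_(i < d.+1) (-1) ^+ (d - i) *: (T p^`N(d - i))^`N(i).

Lemma shift_coef_Pn d p : Pn p -> Pn (shift_coef d p).
Proof. by move=> Pp; apply: inPn_sum => i _; apply/inPnZ/inPn_nderivn/T_Pn/inPn_nderivn. Qed.

Lemma shift_coef0 p : shift_coef 0 p = T p.
Proof. by rewrite /shift_coef big_ord1 expr0 scale1r !nderivn0. Qed.

Lemma shift_coef_eq0 d p : Pn p -> (n + n < d)%N -> shift_coef d p = 0.
Proof.
move=> Pp lt_nn_d; rewrite /shift_coef big1 // => i _.
have [le_in|lt_ni] := leqP i n; last first.
  by rewrite nderivn_poly0 ?scaler0 // (leq_trans (T_Pn (inPn_nderivn _ Pp)) lt_ni).
rewrite (@nderivn_poly0 _ p) ?T0 ?nderivn_poly0 ?size_poly0 ?scaler0 //.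
by apply: leq_trans Pp _; lia.
Qed.

Lemma shift_coefZ d a p : Pn p -> shift_coef d (a *: p) = a *: shift_coef d p.
Proof.
move=> Pp; rewrite /shift_coef scaler_sumr; apply: eq_bigr => i _.
by rewrite nderivnZ TZ ?inPn_nderivn // nderivnZ !scalerA mulrC.
Qed.

Lemma shift_coefMn d k p : Pn p -> shift_coef d (p *+ k) = shift_coef d p *+ k.
Proof. by move=> Pp; rewrite -[p *+ k]scaler_nat shift_coefZ // scaler_nat. Qed.

Lemma deriv_shift_coef d p : Pn p ->
  (shift_coef d p)^`() - shift_coef d p^`() = shift_coef d.+1 p *+ d.+1.
Proof.
move=> Pp; pose G i j := (-1) ^+ j *: (T p^`N(j))^`N(i).
have -> : shift_coef d.+1 p = \sum_(i < d.+2) G i (d.+1 - i)%N.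
  by apply: eq_bigr.
rewrite -sum_antidiagonal_weight /shift_coef -sumrN; congr (_ + _).
  rewrite raddf_sum; apply: eq_bigr => i _.
  by rewrite /= derivZ deriv_nderivn scalerMnr.
apply: eq_bigr => i _; have le_id : (i <= d)%N by rewrite -ltnS.
rewrite nderivn_deriv TMn ?inPn_nderivn // nderivnMn scalerMnr.
by rewrite /G subSn // exprS mulN1r scaleNr.
Qed.

Lemma horner_T_shift m w z : (m <= n)%N ->
  (T (('X - w%:P) ^+ m)).[z + w]
    = \sum_(d < (n + n).+1) w ^+ d * (shift_coef d 'X^m).[z].
Proof.
move=> le_mn; pose X i j := (T ('X^m)^`N(j))^`N(i).
pose F i j := w ^+ (i + j) * ((-1) ^+ j * (X i j).[z]).
rewrite (exprXsubC_nderivn w le_mn) T_sum; last first.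
  by move=> j _; apply/inPnZ/inPn_nderivn/inPnXn.
have taylor j : (T ((-w) ^+ j *: ('X^m)^`N(j))).[z + w]
    = \sum_(i < n.+1) F i j.
  rewrite TZ ?inPn_nderivn ?inPnXn // hornerZ.
  rewrite (nderiv_taylor_wide (mulrC z w) (T_Pn (inPn_nderivn _ (inPnXn _ le_mn)))).
  by rewrite mulr_sumr; apply: eq_bigr => i _; rewrite /F /X (exprNn w) exprD; ring.
rewrite horner_sum; under eq_bigr => j _ do rewrite taylor.
have TX_Pn j : Pn (T ('X^m)^`N(j)) by apply/T_Pn/inPn_nderivn/inPnXn.
rewrite exchange_big /= sum_square_antidiagonal => [|i j lt_ni|i j lt_nj].
- apply: eq_bigr => d _; rewrite /shift_coef horner_sum mulr_sumr.
  apply: eq_bigr => i _; have le_id : (i <= d)%N by rewrite -ltnS.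
  by rewrite /F hornerZ subnKC // mulrA.
- by rewrite /F /X nderivn_poly0 ?horner0 ?mulr0 // (leq_trans (TX_Pn j)).
- rewrite /F /X (nderivn_poly0 (p := 'X^m)) ?T0 ?nderivn_poly0 ?horner0 ?mulr0 ?size_poly0 //.
  by rewrite size_polyXn (leq_trans _ lt_nj).
Qed.

Lemma deriv_shift_coef_Xn d m : (m <= n)%N -> shift_coef d.+1 'X^m = 0 ->
  (shift_coef d 'X^m)^`() = shift_coef d 'X^(m.-1) *+ m.
Proof.
move=> le_mn top; have := deriv_shift_coef d (inPnXn _ le_mn).
rewrite top mul0rn derivXn shift_coefMn; last by apply/inPnXn/(leq_trans (leq_pred m)).
by move/eqP; rewrite subr_eq0 => /eqP.
Qed.

Lemma shifted_roots_bounded r :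
  (forall f, Pn f -> (1 < size f)%N ->
     exists u v, [/\ root f u, root (T f) v & `|u - v| <= r]) ->
  forall m, (0 < m <= n)%N -> forall w, exists2 z, `|z| <= r &
    \sum_(d < (n + n).+1) w ^+ d * (shift_coef d 'X^m).[z] = 0.
Proof.
move=> close m /andP[m_gt0 le_mn] w.
have Pf : Pn (('X - w%:P) ^+ m) by rewrite /inPn size_exp_XsubC.
have [|u [v [fu Tfv le_uv]]] := close _ Pf; first by rewrite size_exp_XsubC ltnS.
exists (v - w).
  move: fu; rewrite rootE horner_exp hornerXsubC expf_eq0 m_gt0 subr_eq0 => /eqP <-.
  by rewrite distrC.
by rewrite -horner_T_shift // subrK; apply/eqP.
Qed.

Section BoundedShiftedRoots.
Variable r : K.
Hypothesis shifted_root : forall m, (0 < m <= n)%N -> forall w, exists2 z, `|z| <= r &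
  \sum_(d < (n + n).+1) w ^+ d * (shift_coef d 'X^m).[z] = 0.

Section TopShiftCoef.
Variable N : nat.
Hypothesis N_gt0 : (0 < N)%N.
Hypothesis shift_coef_gtN :
  forall d m, (N < d)%N -> (m <= n)%N -> shift_coef d 'X^m = 0.
Local Notation B k := (shift_coef N 'X^(k)).

Lemma deriv_shift_top k : (k <= n)%N -> (B k)^`() = B k.-1 *+ k.
Proof. by move=> le_kn; rewrite deriv_shift_coef_Xn // shift_coef_gtN. Qed.

Lemma shift_top_diag k : (k <= n)%N -> (B k)`_k = (B 0)`_0.
Proof.
elim: k => [//|k IH] lt_kn; rewrite -IH; last exact: ltnW.
have /eqP := congr1 (fun q : {poly K} => q`_k) (deriv_shift_top lt_kn).
by rewrite coef_deriv coefMn -subr_eq0 -mulrnBl mulrn_eq0 subr_eq0 => /eqP.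
Qed.

(* [(B k)`_k *+ N] telescopes by [deriv_shift_coef] at [N.-1]: the trace of a
   commutator with [D] vanishes. *)
Lemma shift_top_trace : \sum_(k < n.+1) (B k)`_k *+ N = 0.
Proof.
pose g k := (shift_coef N.-1 'X^(k.-1))`_k *+ k.
have step k : (k <= n)%N -> (B k)`_k *+ N = g k.+1 - g k.
  move=> le_kn; have := deriv_shift_coef N.-1 (inPnXn _ le_kn).
  rewrite prednK // -coefMn => <-.
  rewrite coefB coef_deriv derivXn shift_coefMn ?coefMn //.
  exact/inPnXn/(leq_trans (leq_pred k)).
rewrite (eq_bigr (fun k : 'I_n.+1 => g k.+1 - g k)) => [|k _]; last first.
  by apply: step; rewrite -ltnS.
rewrite -(big_mkord xpredT (fun k => g k.+1 - g k)) telescope_sumr // /g mulr0n subr0.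
by rewrite nth_default ?mul0rn //; apply/shift_coef_Pn/inPnXn.
Qed.

Lemma shift_top_coef00 : (B 0)`_0 = 0.
Proof.
move: shift_top_trace; rewrite (eq_bigr (fun _ => (B 0)`_0 *+ N)) => [|k _]; last first.
  by rewrite shift_top_diag // -ltnS.
rewrite sumr_const card_ord -mulrnA => /eqP; rewrite mulrn_eq0 muln_eq0 /=.
by rewrite eqn0Ngt N_gt0 => /eqP.
Qed.

Lemma shift_top_eq0 m : (m <= n)%N -> B m = 0.
Proof.
move=> le_mn; have [lt_nnN|le_Nnn] := ltnP (n + n) N.
  exact: shift_coef_eq0 (inPnXn _ le_mn) lt_nnN.
apply/eqP/negPn/negP => Bm.
have [k [le_kn ck Bk]] := lowest_nonzero_const deriv_shift_top (ex_intro2 _ _ m le_mn Bm).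
have k_gt0 : (0 < k)%N.
  by rewrite lt0n; apply: contraNneq ck => k0; rewrite k0 shift_top_coef00.
have k_range : (0 < k <= n)%N by rewrite k_gt0.
apply: (no_bounded_roots_top_const (q := fun d => shift_coef d 'X^k) (M := (n + n).+1)
  N_gt0 _ ck Bk).
- by rewrite ltnS.
- by move=> d lt_Nd; apply: shift_coef_gtN.
- exact: shifted_root k_range.
Qed.

End TopShiftCoef.

Lemma shift_coef_pos_eq0 d m : (0 < d)%N -> (m <= n)%N -> shift_coef d 'X^m = 0.
Proof.
suff: forall k d, (n + n < d + k)%N -> (0 < d)%N ->
    forall m, (m <= n)%N -> shift_coef d 'X^m = 0.
  by move=> gen d_gt0; apply: (gen (n + n)%N); lia.
elim=> [|k IH] {}d lt_nn_dk d_gt0 {}m le_mn.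
  by apply: shift_coef_eq0 (inPnXn _ le_mn) _; rewrite -(addn0 d).
apply: shift_top_eq0 d_gt0 _ m le_mn => d' m' lt_dd' le_m'n.
by apply: IH => //; lia.
Qed.

Lemma deriv_T_Xn m : (m <= n)%N -> (T 'X^m)^`() = T 'X^(m.-1) *+ m.
Proof. by move=> le_mn; rewrite -!shift_coef0 deriv_shift_coef_Xn // shift_coef_pos_eq0. Qed.

End BoundedShiftedRoots.

Section CommutingWithDerivative.
Hypothesis DT : forall m, (m <= n)%N -> (T 'X^m)^`() = T 'X^(m.-1) *+ m.
Local Notation S p := (\sum_(k < n.+1) (T (phi k)).[0] *: p^`(k)).

Lemma T_phi_horner0 k : (k <= n)%N -> (T (phi k)).[0] * k`!%:R = (T 'X^k)`_0.
Proof.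
move=> le_kn; rewrite /phi TZ ?inPnXn // hornerZ horner_coef0 mulrAC mulVf ?mul1r //.
by rewrite pnatr_eq0 -lt0n fact_gt0.
Qed.

Lemma deriv_sum_derivn p : (S p)^`() = S p^`().
Proof.
rewrite raddf_sum; apply: eq_bigr => k _.
by rewrite /= derivZ -derivnS derivSn.
Qed.

Lemma sum_derivnMn p m : S (p *+ m) = S p *+ m.
Proof. by rewrite -sumrMnl; apply: eq_bigr => k _; rewrite derivnMn scalerMnr. Qed.

Lemma coef0_sum_derivn_Xn m : (m <= n)%N -> (S 'X^m)`_0 = (T 'X^m)`_0.
Proof.
move=> le_mn; rewrite coef_sum (bigD1 (Ordinal (le_mn : (m < n.+1)%N))) //= big1.
  by rewrite coefZ coef_derivn addn0 coefXn eqxx ffactnn addr0 T_phi_horner0.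
move=> k /eqP neq_km; rewrite coefZ coef_derivn addn0 coefXn.
by case: eqP => [eq_km|]; [case: neq_km; apply: val_inj | rewrite mul0rn mulr0].
Qed.

Lemma T_Xn_sum_derivn m : (m <= n)%N -> T 'X^m = S 'X^m.
Proof.
have eq_of_deriv k : (k <= n)%N -> (T 'X^k - S 'X^k)^`() = 0 -> T 'X^k = S 'X^k.
  move=> le_kn /deriv_eq0_const; rewrite coefB coef0_sum_derivn_Xn // subrr.
  by move/eqP; rewrite subr_eq0 => /eqP.
elim: m => [|m IH] le_mn; apply: eq_of_deriv => //.
  by rewrite derivB DT // deriv_sum_derivn derivXn sum_derivnMn !mulr0n subrr.
by rewrite derivB DT // deriv_sum_derivn derivXn sum_derivnMn /= IH ?subrr // ltnW.
Qed.

Lemma T_sum_derivn f : Pn f -> T f = S f.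
Proof.
move=> Pf; rewrite T_expand // {2}(inPn_expand Pf).
transitivity (\sum_(m < n.+1) \sum_(k < n.+1) f`_m *: ((T (phi k)).[0] *: ('X^m)^`(k))).
  apply: eq_bigr => m _; rewrite T_Xn_sum_derivn ?scaler_sumr //.
  by rewrite -ltnS.
rewrite exchange_big; apply: eq_bigr => k _ /=.
by rewrite raddf_sum scaler_sumr; apply: eq_bigr => m _; rewrite /= derivnZ !scalerA mulrC.
Qed.

Lemma T_phi0_neq0 : (exists2 f, Pn f & T f != 0) ->
  (forall f, Pn f -> (1 < size f)%N -> exists v, root (T f) v) ->
  (T (phi 0)).[0] != 0.
Proof.
move=> [f Pf Tf] roots; have [k [le_kn ck Tk]] : exists k,
    [/\ (k <= n)%N, (T 'X^k)`_0 != 0 & T 'X^k = ((T 'X^k)`_0)%:P].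
  apply: lowest_nonzero_const DT _.
  have [m Tm] : exists m : 'I_n.+1, T 'X^m != 0.
    apply/existsP; apply: contraNT Tf => /existsPn T_X0.
    by rewrite T_expand // big1 // => m _; move/negPn/eqP: (T_X0 m) => ->; rewrite scaler0.
  by exists m; rewrite // -ltnS.
case: k le_kn ck Tk => [|k] le_kn ck Tk.
  by rewrite /phi fact0 invr1 scale1r Tk hornerC.
have [|v] := roots 'X^(k.+1) (inPnXn _ le_kn); first by rewrite size_polyXn.
by rewrite Tk rootC (negbTE ck).
Qed.

End CommutingWithDerivative.
End LinearOperator.

Theorem mainTheorem10 (R : realType) (n : nat) (T : {poly R[i]} -> {poly R[i]})
  (C : R) :
  (1 <= n)%N ->
  is_op_Pn n T ->
  (exists f, inPn n f /\ T f != 0) ->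
  0 < C ->
  (forall f : {poly R[i]}, inPn n f -> (1 < size f)%N ->
     exists u v : R[i], [/\ root f u, root (T f) v & `|u - v| <= (C%:C)%C]) ->
  (forall f, inPn n f ->
     T f = \sum_(k < n.+1) (T (phi k)).[0] *: f^`(k)) /\
  (T (phi 0)).[0] != 0.
Proof.
move=> _ T_op [f [Pf Tf]] _ close_roots.
have DT := deriv_T_Xn T_op (shifted_roots_bounded T_op close_roots).
split; first exact: T_sum_derivn T_op DT.
apply: T_phi0_neq0 T_op DT _ _; first by exists f.
by move=> g Pg /(close_roots g Pg) [u [v [_ Tv _]]]; exists v.
Qed.
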